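(* Consider the Histogram Partitioning algorithm (described in the context) run on $N$ distinct keys distributed over $p$ processors. If at the start of the $j$-th round exactly $k$ splitters are unachieved, then the sampled set satisfies $|\gamma_j| \le \frac{3kN}{p}$.
   Context: Setting: $N$ distinct keys from a totally ordered set (only comparisons are used) are distributed across $p$ processors, $N/p$ keys per processor. $R(x)$ denotes the global rank of key $x$. For $\ell\in\{1,\dots,p-1\}$, the target range of splitter $\ell$ is the rank range $[\frac{N\ell}{p},\frac{N\ell}{p}+\frac{N}{p}]$; splitter $\ell$ is achieved in a round if some key whose rank lies in this range is sampled in that round (and it stays achieved afterwards). Histogram Partitioning proceeds in rounds $j=1,2,\dots$. In round $j$ there is a set $\gamma_j$ of keys from which samples are drawn ($\gamma_1$ is the whole input): each key of $\gamma_j$ is sampled independently with some probability $s_j$, the global ranks (histogram) of all sampled keys are computed and made known to all processors. For every splitter $\ell$ not yet achieved, the algorithm maintains bounds: $L_j(\ell)$ is the largest key sampled before round $j$ whose rank is below $\frac{N\ell}{p}$ (or the smallest key if none), and $U_j(\ell)$ is the smallest key sampled before round $j$ whose rank is above $\frac{N\ell}{p}+\frac{N}{p}$ (or the largest key if none). Then $\gamma_j$ is the union, over all splitters $\ell$ unachieved before round $j$, of the sets of keys lying between $L_j(\ell)$ and $U_j(\ell)$. *)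

From mathcomp Require Import all_boot all_order.
Set Implicit Arguments. Unset Strict Implicit. Unset Printing Implicit Defensive.
Import Order.TTheory.

(* The input: a nonempty finite totally ordered type T whose elements are
   exactly the N = #|T| distinct input keys.  \bot / \top are the smallest /
   largest keys.  Parameters: p processors, n = N/p keys per processor.
   Rounds are numbered 1, 2, ...; S i : {set T} is the set of keys sampled
   in round i. *)

Section HistPart.
Variables (d : Order.disp_t) (T : finTBOrderType d).

Definition rank (x : T) : nat := #|[set y : T | (y < x)%O]|.

Definition in_target (n l r : nat) : bool := (n * l <= r) && (r <= n * l + n).

Definition sampled_before (S : nat -> {set T}) (j : nat) : {set T} :=
  \bigcup_(1 <= i < j) S i.

Definition achieved (S : nat -> {set T}) (n j l : nat) : bool :=
  [exists x in sampled_before S j, in_target n l (rank x)].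

Definition Lbound (S : nat -> {set T}) (n j l : nat) : T :=
  \big[(@Order.max _ T)/(\bot%O : T)]_(y in sampled_before S j | rank y < n * l) y.

Definition Ubound (S : nat -> {set T}) (n j l : nat) : T :=
  \big[(@Order.min _ T)/(\top%O : T)]_(y in sampled_before S j | n * l + n < rank y) y.

(* splitters are l = 1, ..., p-1 *)
Definition unachieved (S : nat -> {set T}) (p n j : nat) : {set 'I_p} :=
  [set l : 'I_p | (0 < val l) && ~~ achieved S n j l].

Definition gamma (S : nat -> {set T}) (p n j : nat) : {set T} :=
  if j <= 1 then setT
  else [set x : T | [exists l in unachieved S p n j,
          (Lbound S n j l < x)%O && (x < Ubound S n j l)%O]].
End HistPart.

From mathcomp Require Import all_boot all_order.
From mathcomp Require Import zify.
Set Implicit Arguments.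
Unset Strict Implicit.
Unset Printing Implicit Defensive.
Import Order.TTheory.

(* Let x be in gamma_j, so L_j(l) < x < U_j(l) for some unachieved splitter l,
   and let r be the rank of x.  Sampled keys of rank below N l/p are at most
   L_j(l) < x, those of rank above N l/p + N/p are at least U_j(l) > x, and
   none lies in the target range of l; hence no sampled key has its rank in
   the hull of r and that target range.  This gap has length at least N/p, so
   it contains the whole target range of a splitter l' whose rank window
   [N l'/p - N/p, N l'/p + 2N/p) contains r, and l' is unachieved as well.
   Thus gamma_j is covered by the k windows of the unachieved splitters, each
   of which holds at most 3N/p keys.  In round 1 all N keys form gamma_1,
   but then k = p - 1 and N <= 3(p - 1)N/p as p >= 2. *)

Lemma leq_card_bigcup (T I : finType) (P : pred I) (F : I -> {set T}) :
  #|\bigcup_(i | P i) F i| <= \sum_(i | P i) #|F i|.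
Proof.
elim/big_rec2: _ => [|i m U _ IH]; first by rewrite cards0.
by rewrite (leq_trans (leq_card_setU _ _).1) ?leq_add2l.
Qed.

Lemma splitter_near_rank (n p l r : nat) :
  0 < n -> 0 < l < p -> r < n * p ->
  exists2 l', 0 < l' < p &
    [/\ minn r (n * l) <= n * l', n * l' + n <= maxn r (n * l + n)
      & n * l' - n <= r < n * l' - n + 3 * n].
Proof.
move=> n0 /andP[l0 lp] rp.
have rE := divn_eq r n; have mn := ltn_pmod r n0.
have qp : r %/ n < p by rewrite ltn_divLR // mulnC.
have [rl|lr] := ltnP r (n * l).
  have : r %/ n < l by rewrite ltn_divLR // mulnC.
  by exists (r %/ n).+1; [|split]; nia.
have [rl'|lr'] := leqP r (n * l + n).
  by exists l; [|split]; nia.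
have : l < r %/ n by rewrite leq_divRL //; nia.
by exists (r %/ n).-1; [|split]; nia.
Qed.

Section Rank.
Variables (d : Order.disp_t) (T : finTBOrderType d).

Lemma rank_lt (x y : T) : (x < y)%O -> rank x < rank y.
Proof.
move=> xy; apply: proper_card; apply/properP; split.
  by apply/subsetP=> z; rewrite !inE => zx; apply: lt_trans zx xy.
by exists x; rewrite !inE ?ltxx.
Qed.

Lemma rank_inj : injective (@rank d T).
Proof.
by move=> x y rxy; case: (ltgtP x y) => // /rank_lt; rewrite rxy ltnn.
Qed.

Lemma rank_lt_card (x : T) : rank x < #|T|.
Proof.
rewrite -cardsT; apply: proper_card; apply/properP; split; first exact: subsetT.
by exists x; rewrite !inE ?ltxx.
Qed.

Definition rank_window (a m : nat) : {set T} := [set x | a <= rank x < a + m].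

Lemma card_rank_window (a m : nat) : #|rank_window a m| <= m.
Proof.
rewrite cardE -[m in _ <= m](size_iota a) -(size_map (@rank d T)).
apply: uniq_leq_size; first by rewrite (map_inj_uniq rank_inj) enum_uniq.
by move=> r /mapP[x]; rewrite mem_enum inE mem_iota => xw ->.
Qed.

End Rank.

Section Round.
Variables (d : Order.disp_t) (T : finTBOrderType d).
Variables (S : nat -> {set T}) (p n j : nat).

Let sampled := sampled_before S j.

Lemma unachievedP (l : 'I_p) :
  reflect (0 < l /\ {in sampled, forall y, ~~ in_target n l (rank y)})
          (l \in unachieved S p n j).
Proof.
rewrite inE /achieved; apply: (iffP andP) => -[l0 nach]; split=> //.
  by move=> y ys; apply: contra nach => ty; apply/existsP; exists y; rewrite ys.
by apply/existsP => -[y /andP[/nach/negP]].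
Qed.

Lemma le_Lbound (l : nat) (y : T) :
  y \in sampled -> rank y < n * l -> (y <= Lbound S n j l)%O.
Proof.
by move=> ys yl; apply: (le_bigmax_cond _
  (P := fun y => (y \in sampled) && (rank y < n * l))); rewrite ys yl.
Qed.

Lemma Ubound_le (l : nat) (y : T) :
  y \in sampled -> n * l + n < rank y -> (Ubound S n j l <= y)%O.
Proof.
by move=> ys ly; apply: (bigmin_le_cond _
  (P := fun y => (y \in sampled) && (n * l + n < rank y))); rewrite ys ly.
Qed.

Lemma sampled_rank_gap (l : 'I_p) (x y : T) :
  l \in unachieved S p n j ->
  (Lbound S n j l < x)%O -> (x < Ubound S n j l)%O -> y \in sampled ->
  ~~ (minn (rank x) (n * l) <= rank y <= maxn (rank x) (n * l + n)).
Proof.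
move=> /unachievedP[_ nach] Lx xU ys; have := nach y ys; rewrite /in_target.
have [yl|ly] := ltnP (rank y) (n * l).
  by have := rank_lt (le_lt_trans (le_Lbound ys yl) Lx); lia.
have [yu|uy] := leqP (rank y) (n * l + n); first by [].
by have := rank_lt (lt_le_trans xU (Ubound_le ys uy)); lia.
Qed.

Lemma gamma_sub_windows :
  1 < j -> #|T| = n * p -> 0 < n ->
  gamma S p n j \subset
    \bigcup_(l in unachieved S p n j) rank_window T (n * l - n) (3 * n).
Proof.
move=> j1 cT n0; apply/subsetP => x.
rewrite /gamma leqNgt j1 inE => /existsP[l /and3P[lU Lx xU]].
have [l0 _] := unachievedP l lU.
have lp : 0 < l < p by rewrite l0 ltn_ord.
have rp : rank x < n * p by rewrite -cT rank_lt_card.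
have [l' /andP[l'0 l'p] [gap_lo gap_hi win]] := splitter_near_rank n0 lp rp.
apply/bigcupP; exists (Ordinal l'p); last by rewrite inE.
apply/unachievedP; split=> // y ys /=; rewrite /in_target.
by apply: contra (sampled_rank_gap lU Lx xU ys) => /andP[? ?]; lia.
Qed.

End Round.

Lemma unachieved_round1 (d : Order.disp_t) (T : finTBOrderType d)
    (S : nat -> {set T}) (p n : nat) :
  #|unachieved S p n 1| = p.-1.
Proof.
case: p => [|p]; first by apply: eq_card0 => -[].
have nothing_sampled : sampled_before S 1 = set0 by rewrite /sampled_before big_geq.
have -> : unachieved S p.+1 n 1 = [set~ ord0].
  apply/setP => l; rewrite !inE /achieved nothing_sampled lt0n.
  rewrite (_ : [exists x in set0, _] = false); last first.
    by apply/existsP => -[x]; rewrite inE.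
  by rewrite andbT -val_eqE.
by rewrite cardsC1 card_ord.
Qed.

Theorem lemma2p2 (d : Order.disp_t) (T : finTBOrderType d) (p n : nat)
    (S : nat -> {set T}) (j k : nat) :
  1 < p ->
  #|T| = n * p ->
  (forall i, 1 <= i < j -> S i \subset gamma S p n i) ->
  1 <= j ->
  #|unachieved S p n j| = k ->
  #|gamma S p n j| <= 3 * k * n.
Proof.
move=> p1 cT _ j1 <-.
have n0 : 0 < n.
  have : 0 < #|T| by apply/card_gt0P; exists \bot%O.
  by rewrite cT muln_gt0 => /andP[].
have [j_le1|j_gt1] := leqP j 1.
  have -> : j = 1 by apply/eqP; rewrite eqn_leq j_le1 j1.
  by rewrite /gamma leqnn cardsT cT unachieved_round1; nia.
apply: (leq_trans (subset_leq_card (gamma_sub_windows S j_gt1 cT n0))).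
apply: (leq_trans (leq_card_bigcup _ _)).
apply: (@leq_trans (\sum_(l in unachieved S p n j) 3 * n)).
  by apply: leq_sum => l _; apply: card_rank_window.
by rewrite sum_nat_const; lia.
Qed.
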